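(* Let $c\in\mathbb{C}(t)\setminus\{0,1,t\}$ and $F_n$, $P_1$ as in the context. Write $F_n(t,1)=(E_n+D_nt+O(t^2),\;C_n+O(t))$ as polynomials in $t$. Then $E_n=P_1(0,1)^{4^{n-1}}$ for all $n\ge1$, and $$\limsup_{n\to\infty}|C_n|^{1/4^{n-1}}\le|P_1(0,1)|,\qquad\limsup_{n\to\infty}|D_n|^{1/4^{n-1}}\le|P_1(0,1)|.$$
   Context: $F_{t_1,t_2}(z,w)=\big((t_1w^2-t_2z^2)^2,\;4t_2zw(w-z)(t_1w-t_2z)\big)$. $C=(c_1,c_2)$ is a pair of coprime homogeneous polynomials in $(t_1,t_2)$ of equal degree with $c(t)=c_1(t,1)/c_2(t,1)$. $F_1=F_{t_1,t_2}(C)/\gcd(F_{t_1,t_2}(C))=(P_1,Q_1)$ (dividing by the gcd of the two coordinates), and $F_{n+1}=F_{t_1,t_2}(F_n)/t_2^2$ (substituting the coordinates of $F_n$ for $(z,w)$). *)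

From HB Require Import structures.
From mathcomp Require Import all_boot all_order all_algebra.
From mathcomp Require Import all_classical all_reals all_analysis.
From mathcomp Require Import complex.
Set Implicit Arguments.
Unset Strict Implicit.
Unset Printing Implicit Defensive.
Import Order.TTheory GRing.Theory Num.Theory.
Local Open Scope ring_scope.
Local Open Scope complex_scope.

(* Everything is dehomogenized at t2 = 1: a homogeneous polynomial H(t1,t2)
   is represented by the univariate polynomial H(t,1) in {poly R[i]}, with
   t = 'X.            *)
Definition Fmap (R : rcfType) (zw : {poly R[i]} * {poly R[i]}) :
    {poly R[i]} * {poly R[i]} :=
  let z := zw.1 in let w := zw.2 in
  (('X * w ^+ 2 - z ^+ 2) ^+ 2, 4%:R * z * w * (w - z) * ('X * w - z)).

(* F_1(t,1) = F_{t,1}(C(t,1)) divided by the gcd of its two coordinates. *)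
Definition F1 (R : rcfType) (c1 c2 : {poly R[i]}) : {poly R[i]} * {poly R[i]} :=
  let PQ := Fmap (c1, c2) in
  let g := gcdp PQ.1 PQ.2 in (PQ.1 %/ g, PQ.2 %/ g).

(* Fn c1 c2 n = F_n(t,1) for n >= 1 (F_{n+1} = F(F_n)/t2^2, and t2 = 1). *)
Definition Fn (R : rcfType) (c1 c2 : {poly R[i]}) (n : nat) :
    {poly R[i]} * {poly R[i]} :=
  iter n.-1 (@Fmap R) (F1 c1 c2).

Definition En (R : rcfType) c1 c2 n : R[i] := (@Fn R c1 c2 n).1`_0.
Definition Dn (R : rcfType) c1 c2 n : R[i] := (@Fn R c1 c2 n).1`_1.
Definition Cn (R : rcfType) c1 c2 n : R[i] := (@Fn R c1 c2 n).2`_0.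
Definition P10 (R : rcfType) c1 c2 : R[i] := (@F1 R c1 c2).1`_0.

From HB Require Import structures.
From mathcomp Require Import all_boot all_order all_algebra.
From mathcomp Require Import all_classical all_reals all_analysis.
From mathcomp Require Import complex.
From mathcomp Require Import ring lra.
Import numFieldNormedType.Exports.
Set Implicit Arguments.
Unset Strict Implicit.
Unset Printing Implicit Defensive.
Import Order.TTheory GRing.Theory Num.Theory.
Local Open Scope ring_scope.
Local Open Scope complex_scope.

(* Only the coefficients of t^0 and t^1 enter: writing F_n(t,1) = (E + D t + .., C + ..),
   one step of F gives E' = E^4, C' = 4 E^2 C (E - C) and D' = 2 E^2 (2 E D - C^2).
   Hence |E_n| = e^(4^(n-1)) with e = |P_1(0,1)|, and since C', D' are quadratic in
   (C, D) with weight E^2, the bound 8 |C_n|, 8 |D_n| <= e^(4^(n-1)) L^(2^(n-1)) for a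
   suitable L >= 8 is inductive (trivial from n = 2 on when e = 0); its 4^(n-1)-th root is e L^(1/2^(n-1)), which tends to e. *)

Lemma coef1M (R : comNzRingType) (p q : {poly R}) :
  (p * q)`_1 = p`_0 * q`_1 + p`_1 * q`_0.
Proof. by rewrite coefM big_ord_recr big_ord1. Qed.

Section FmapCoef.
Variable R : rcfType.
Implicit Types zw : {poly R[i]} * {poly R[i]}.

Lemma Fmap_fst_coef0 zw : (Fmap zw).1`_0 = zw.1`_0 ^+ 4.
Proof.
rewrite /Fmap /= !expr2 !coef0M !coefB coefXM /= !coef0M sub0r; ring.
Qed.

Lemma Fmap_snd_coef0 zw :
  (Fmap zw).2`_0 = 4%:R * zw.1`_0 ^+ 2 * zw.2`_0 * (zw.1`_0 - zw.2`_0).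
Proof.
rewrite /Fmap /= !coef0M !coefB coefXM /= sub0r coefMn coef1 /=; ring.
Qed.

Lemma Fmap_fst_coef1 zw :
  (Fmap zw).1`_1 =
  2%:R * zw.1`_0 ^+ 2 * (2%:R * zw.1`_0 * zw.1`_1 - zw.2`_0 ^+ 2).
Proof.
rewrite /Fmap /= (expr2 (_ - _)) coef1M !coefB !coefXM /= !expr2 coef1M.
rewrite !coef0M sub0r; ring.
Qed.

End FmapCoef.

Section NormcFacts.
Variable R : rcfType.
Implicit Types x y : R[i].

Lemma normc_ge0 x : 0 <= Normc.normc x.
Proof. by case: x => a b; exact: sqrtr_ge0. Qed.

Lemma normcX x n : Normc.normc (x ^+ n) = Normc.normc x ^+ n.
Proof.
elim: n => [|n IH]; first by rewrite !expr0 Normc.normc1.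
by rewrite !exprS Normc.normcM IH.
Qed.

Lemma normc_nat n : Normc.normc (n%:R : R[i]) = n%:R.
Proof. by rewrite normcMn Normc.normc1. Qed.

Lemma le_normcB x y : Normc.normc (x - y) <= Normc.normc x + Normc.normc y.
Proof. by rewrite -(normcN y); apply: le_normcD. Qed.

End NormcFacts.

Lemma square_growth_step (R : realFieldType) (eps b c d : R) :
  0 <= eps -> 8 <= b -> 0 <= c -> 0 <= d -> 8 * c <= eps * b -> 8 * d <= eps * b ->
  8 * (4 * eps ^+ 2 * c * (eps + c)) <= eps ^+ 4 * b ^+ 2 /\
  8 * (2 * eps ^+ 2 * (2 * eps * d + c ^+ 2)) <= eps ^+ 4 * b ^+ 2.
Proof.
move=> eps0 b8 c0 d0 hc hd.
have heps : 8 * eps <= eps * b by nra.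
have hc2 : 8 * c * (8 * c) <= eps * b * (eps * b) by rewrite ler_pM // ?mulr_ge0 //; lra.
have hcs : 8 * c * (8 * (eps + c)) <= eps * b * (2 * (eps * b)).
  by rewrite ler_pM // ?mulr_ge0 //; lra.
split; first nra.
have hd3 : eps ^+ 3 * (8 * d) <= eps ^+ 3 * (eps * b) by rewrite ler_wpM2l ?exprn_ge0.
have hb : eps ^+ 4 * (16 * b) <= eps ^+ 4 * (3 * b ^+ 2).
  by rewrite ler_wpM2l ?exprn_ge0 //; nra.
nra.
Qed.

Section Growth.
Variable R : rcfType.
Variables E C D : nat -> R[i].
Hypothesis E_rec : forall k, E k.+1 = E k ^+ 4.
Hypothesis C_rec : forall k, C k.+1 = 4%:R * E k ^+ 2 * C k * (E k - C k).
Hypothesis D_rec :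
  forall k, D k.+1 = 2%:R * E k ^+ 2 * (2%:R * E k * D k - C k ^+ 2).

Local Notation e := (Normc.normc (E 0)).
Local Notation normc := Normc.normc.

Lemma E_iter k : E k = E 0 ^+ (4 ^ k).
Proof. by elim: k => [|k IH]; rewrite ?expr1 // E_rec IH -exprM expnSr. Qed.

Lemma normc_E k : normc (E k) = e ^+ (4 ^ k).
Proof. by rewrite E_iter normcX. Qed.

Lemma normc_C_rec k :
  normc (C k.+1) <= 4 * normc (E k) ^+ 2 * normc (C k) * (normc (E k) + normc (C k)).
Proof.
rewrite C_rec !Normc.normcM normc_nat -expr2.
by rewrite ler_wpM2l ?mulr_ge0 ?exprn_ge0 ?normc_ge0 // le_normcB.
Qed.

Lemma normc_D_rec k :
  normc (D k.+1) <=
  2 * normc (E k) ^+ 2 * (2 * normc (E k) * normc (D k) + normc (C k) ^+ 2).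
Proof.
rewrite D_rec !Normc.normcM normc_nat -expr2.
rewrite ler_wpM2l ?mulr_ge0 ?exprn_ge0 ?normc_ge0 //.
by rewrite (le_trans (le_normcB _ _)) // normcX !Normc.normcM normc_nat.
Qed.

Lemma normc_CD_bound (L : R) : 8 <= L ->
    8 * normc (C 0) <= e * L -> 8 * normc (D 0) <= e * L ->
  forall k, 8 * normc (C k) <= e ^+ (4 ^ k) * L ^+ (2 ^ k) /\
            8 * normc (D k) <= e ^+ (4 ^ k) * L ^+ (2 ^ k).
Proof.
move=> L8 C0 D0; elim=> [|k [IHc IHd]]; first by rewrite !expr1.
have b8 : 8 <= L ^+ (2 ^ k).
  by rewrite (le_trans L8) // ler_eXnr ?expn_gt0 //; lra.
rewrite !expnSr !exprM -!normc_E in IHc IHd *.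
have [stepC stepD] := square_growth_step (normc_ge0 (E k)) b8
  (normc_ge0 (C k)) (normc_ge0 (D k)) IHc IHd.
split.
- by rewrite (le_trans _ stepC) // ler_pM2l // normc_C_rec.
- by rewrite (le_trans _ stepD) // ler_pM2l // normc_D_rec.
Qed.

Lemma normc_CD_eventual_bound : exists2 L : R, 8 <= L &
  forall k, (1 <= k)%N -> 8 * normc (C k) <= e ^+ (4 ^ k) * L ^+ (2 ^ k) /\
                         8 * normc (D k) <= e ^+ (4 ^ k) * L ^+ (2 ^ k).
Proof.
have [c0 d0] := (normc_ge0 (C 0), normc_ge0 (D 0)).
have [e0|e_gt0] := eqVneq e 0; last first.
  have {}e_gt0 : 0 < e by rewrite lt_def e_gt0 normc_ge0.
  set L := 8 * (1 + (normc (C 0) + normc (D 0)) / e).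
  have eL : e * L = 8 * (e + normc (C 0) + normc (D 0)).
    by rewrite /L; field; rewrite gt_eqF.
  have L8 : 8 <= L.
    by rewrite -[leLHS]mulr1 ler_pM2l // lerDl divr_ge0 ?addr_ge0 // ltW.
  by exists L => // k _; apply: normc_CD_bound; rewrite // eL; lra.
have E0 k : E k = 0 by apply: Normc.eq0_normc; rewrite normc_E e0 expr0n expn_eq0.
exists 8 => // [[|k]] // _.
rewrite e0 expr0n expn_eq0 /= mul0r.
have [Cle Dle] := (normc_C_rec k, normc_D_rec k).
rewrite E0 Normc.normc0 expr0n /= !mulr0 !mul0r in Cle Dle.
by rewrite !pmulr_rle0.
Qed.

End Growth.

Lemma bernoulli_ineq (R : realDomainType) (t : R) n :
  0 <= t -> 1 + n%:R * t <= (1 + t) ^+ n.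
Proof.
move=> t0; elim: n => [|n IH]; first by rewrite mul0r addr0 expr0.
have nt0 : 0 <= n%:R * t by rewrite mulr_ge0.
rewrite exprS -natr1; nra.
Qed.

Section RootBound.
Variable R : realType.
Local Open Scope classical_set_scope.

Lemma powR_inv_le (x y : R) m : 0 <= x -> 0 <= y -> (0 < m)%N ->
  x <= y ^+ m -> x `^ m%:R^-1 <= y.
Proof.
move=> x0 y0 m0 xy.
rewrite (le_trans (ge0_ler_powR _ _ _ xy)) ?nnegrE ?invr_ge0 ?exprn_ge0 //.
by rewrite -powR_mulrn // -powRrM divff ?powRr1 // pnatr_eq0 -lt0n.
Qed.

(* Bernoulli's inequality replaces the limit of L ^ (1 / 2 ^ n) by the explicit
   majorant 1 + (L - 1) / 2 ^ n. *)
Lemma root_le_geometric (e L x : R) n : 0 <= e -> 1 <= L -> 0 <= x ->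
  x <= e ^+ (4 ^ n) * L ^+ (2 ^ n) ->
  x `^ (4 ^ n)%:R^-1 <= e * (1 + (L - 1) * 2^-1 ^+ n).
Proof.
move=> e0 L1 x0 xle.
set t := (L - 1) * 2^-1 ^+ n.
have t0 : 0 <= t by rewrite mulr_ge0 ?exprn_ge0 ?invr_ge0 // subr_ge0.
apply: powR_inv_le; rewrite ?mulr_ge0 ?expn_gt0 //; first lra.
have L_le : L <= (1 + t) ^+ (2 ^ n).
  rewrite (le_trans _ (bernoulli_ineq _ t0)) // /t natrX exprVn mulrCA.
  by rewrite mulfV ?mulr1 ?subrKC // expf_neq0.
rewrite (le_trans xle) // exprMn ler_wpM2l ?exprn_ge0 //.
have -> : (4 ^ n = 2 ^ n * 2 ^ n)%N by rewrite -expnMn.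
rewrite exprM lerXn2r ?nnegrE ?exprn_ge0 //; lra.
Qed.

Lemma cvg_geometric_perturbation (e K : R) :
  (fun n => e * (1 + K * 2^-1 ^+ n)) @ \oo --> e.
Proof.
rewrite -[X in _ --> X]mulr1 -[X in _ --> e * X]addr0.
apply: cvgM; first exact: cvg_cst.
apply: cvgD; first exact: cvg_cst.
by apply: cvg_geometric; rewrite ger0_norm // invr_lt1 ?ltr1n ?unitfE.
Qed.

Lemma limn_esup_le_cvg_ub (u v : (\bar R)^nat) (l : \bar R) N :
  (forall n, (N <= n)%N -> (u n <= v n)%E) -> v @ \oo --> l ->
  (limn_esup u <= l)%E.
Proof.
move=> uv vl; rewrite limn_esup_lim -(cvg_lim _ (cvg_esups vl)) //.
apply: lee_lim; [exact: is_cvg_esups | exact: is_cvg_esups |].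
near=> n; apply: ge_ereal_sup => _ [k /= nk <-].
have Nk : (N <= k)%N by apply: leq_trans nk; near: n; exists N.
by rewrite (le_trans (uv k Nk)) //; apply: ereal_sup_ubound; exists k.
Unshelve. all: by end_near. Qed.

Lemma limn_esup_root_le (x : nat -> R) (e L : R) N :
  0 <= e -> 1 <= L -> (forall n, 0 <= x n) ->
  (forall n, (N <= n)%N -> x n <= e ^+ (4 ^ n) * L ^+ (2 ^ n)) ->
  (limn_esup (fun n => (x n `^ (4 ^ n)%:R^-1)%:E) <= e%:E)%E.
Proof.
move=> e0 L1 x0 xle.
apply: (@limn_esup_le_cvg_ub _ (fun n => (e * (1 + (L - 1) * 2^-1 ^+ n))%:E) _ N).
  by move=> n Nn; rewrite lee_fin root_le_geometric ?xle.
by apply: cvg_EFin; [exact: nearW | exact: cvg_geometric_perturbation].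
Qed.

End RootBound.

Theorem lemma4p6 (R : realType) (c1 c2 : {poly R[i]}) :
  coprimep c1 c2 -> c2 != 0 ->
  c1 != 0 -> c1 != c2 -> c1 != 'X * c2 ->
  (forall n : nat, (1 <= n)%N ->
     En c1 c2 n = P10 c1 c2 ^+ (4 ^ n.-1)) /\
  (limn_esup (fun n : nat =>
     ((Normc.normc (Cn c1 c2 n.+1)) `^ (4 ^ n)%:R^-1)%:E)
     <= (Normc.normc (P10 c1 c2))%:E)%E /\
  (limn_esup (fun n : nat =>
     ((Normc.normc (Dn c1 c2 n.+1)) `^ (4 ^ n)%:R^-1)%:E)
     <= (Normc.normc (P10 c1 c2))%:E)%E.
Proof.
move=> _ _ _ _ _.
pose E k := En c1 c2 k.+1; pose C k := Cn c1 c2 k.+1; pose D k := Dn c1 c2 k.+1.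
have Fn_rec k : Fn c1 c2 k.+2 = Fmap (Fn c1 c2 k.+1) by [].
have E_rec k : E k.+1 = E k ^+ 4 by rewrite /E /En Fn_rec Fmap_fst_coef0.
have C_rec k : C k.+1 = 4%:R * E k ^+ 2 * C k * (E k - C k).
  by rewrite /C /Cn Fn_rec Fmap_snd_coef0.
have D_rec k : D k.+1 = 2%:R * E k ^+ 2 * (2%:R * E k * D k - C k ^+ 2).
  by rewrite /D /Dn Fn_rec Fmap_fst_coef1.
split; first by case=> // n _; exact: (E_iter E_rec n).
have [L L8 CD_le] := normc_CD_eventual_bound E_rec C_rec D_rec.
have esup_le (x : nat -> R) : (forall n, 0 <= x n) ->
    (forall n, (1 <= n)%N -> 8 * x n <= Normc.normc (E 0) ^+ (4 ^ n) * L ^+ (2 ^ n)) ->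
    (limn_esup (fun n => (x n `^ (4 ^ n)%:R^-1)%:E) <= (Normc.normc (E 0))%:E)%E.
  move=> x0 x_le; apply: (limn_esup_root_le (L := L) (N := 1)) => //.
  - exact: normc_ge0.
  - lra.
  - by move=> n /x_le; have := x0 n; lra.
by split; apply: esup_le => [n|n /CD_le[]] //; exact: normc_ge0.
Qed.
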